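(* Let $(Z_i)_{i\ge1}$ be i.i.d. non-constant real random variables. For each $n$ let $(a_{n,i})_{i\ge1}$ be real constants, and for $k\ge1$ let $M_{n,k}$ be the $k$-th largest of $(a_{n,i}+Z_i)_{i\ge1}$. If $M_{n,1}\to0$ in probability as $n\to\infty$, then for each $k\ge1$, $M_{n,k}\to0$ in probability as $n\to\infty$.
   Context: The $k$-th largest value (counted with multiplicity) is $M_{n,k}=\sup\{x\in\mathbb R:\#\{i:a_{n,i}+Z_i\ge x\}\ge k\}\in[-\infty,\infty]$. *)

From HB Require Import structures.
From mathcomp Require Import all_boot all_order all_algebra.
From mathcomp Require Import all_classical all_reals all_analysis.
Set Implicit Arguments. Unset Strict Implicit. Unset Printing Implicit Defensive.
Import Order.TTheory GRing.Theory Num.Theory.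
Local Open Scope classical_set_scope.
Local Open Scope ring_scope.

Definition mutually_independent d (T : measurableType d) (R : realType)
    (P : probability T R) (Z : nat -> {RV P >-> R}) : Prop :=
  forall (I : seq nat), uniq I ->
  forall (B : nat -> set R), (forall i, measurable (B i)) ->
  P (\bigcap_(i in [set` I]) (Z i @^-1` B i)) =
  (\prod_(i <- I) P (Z i @^-1` B i))%E.

Definition identically_distributed d (T : measurableType d) (R : realType)
    (P : probability T R) (Z : nat -> {RV P >-> R}) : Prop :=
  forall i (B : set R), measurable B -> P (Z i @^-1` B) = P (Z 0%N @^-1` B).

Definition iid d (T : measurableType d) (R : realType)
    (P : probability T R) (Z : nat -> {RV P >-> R}) : Prop :=
  mutually_independent Z /\ identically_distributed Z.

Definition nonconstant_rv d (T : measurableType d) (R : realType)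
    (P : probability T R) (X : {RV P >-> R}) : Prop :=
  ~ (exists c : R, P (X @^-1` [set c]) = 1%E).

(* k-th largest value (with multiplicity) of (a n i + Z i w)_i :
   sup { x | #{ i | a n i + Z i w >= x } >= k } in the extended reals. *)
Definition kth_largest d (T : measurableType d) (R : realType)
    (P : probability T R) (a : nat -> nat -> R) (Z : nat -> {RV P >-> R})
    (n k : nat) (w : T) : \bar R :=
  ereal_sup [set x%:E | x in
    [set x : R | exists s : seq nat,
       [/\ uniq s, size s = k & forall i, i \in s -> x <= a n i + Z i w]]].

Definition cvg_in_prob0 d (T : measurableType d) (R : realType)
    (P : probability T R) (X : nat -> T -> \bar R) : Prop :=
  forall e : R, 0 < e ->
    P [set w | (e%:E < `| X n w |)%E] @[n --> \oo] --> 0%E.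

(* Since Z is not a.s. constant there are u < v with b := P(Z <= u) > 0 and
   P(Z > v) > 0.  Fix 0 < eta <= (v - u)/2.  If a_{n,i} + v >= eta for some i,
   then P(M_{n,1} > eta) >= P(Z_i > v), which does not tend to 0; so eventually
   every event L_i := {a_{n,i} + Z_i <= -eta} contains {Z_i <= u} and has
   probability at least b, while the intersection of all L_i forces
   M_{n,1} <= -eta and so has vanishing probability.  By independence the
   probability that all L_i with i in a finite I occur is the product of the
   P(L_i) >= b, hence the indices can be cut greedily into k consecutive blocks,
   in each of which all L_i occur with probability at most delta.  Outside these
   k events (total probability <= k delta) every block has an index with
   a_{n,i} + Z_i > -eta, i.e. M_{n,k} >= -eta; together with M_{n,k} <= M_{n,1}
   this makes |M_{n,k}| > e imply |M_{n,1}| > e when eta <= e. *)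

From HB Require Import structures.
From mathcomp Require Import all_boot all_order all_algebra.
From mathcomp Require Import all_classical all_reals all_analysis.
From mathcomp Require Import measurable_realfun lra.
Set Implicit Arguments. Unset Strict Implicit. Unset Printing Implicit Defensive.
Import Order.TTheory GRing.Theory Num.Theory.
Local Open Scope classical_set_scope.
Local Open Scope ring_scope.

Section ereal_limits.
Context {R : realType} {T : Type} {F : set_system T} {FF : Filter F}.
Local Open Scope ereal_scope.

Lemma cvge_lt_near (f : T -> \bar R) (l x : \bar R) :
  f @ F --> l -> l < x -> \forall t \near F, f t < x.
Proof. by move=> fl lx; exact: fl _ (open_ereal_lt' lx). Qed.

Lemma cvge_gt_near (f : T -> \bar R) (l x : \bar R) :
  f @ F --> l -> x < l -> \forall t \near F, x < f t.
Proof. by move=> fl xl; exact: fl _ (open_ereal_gt' xl). Qed.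

Lemma cvge0_le (f : T -> \bar R) : (forall t, 0 <= f t) ->
  (forall e : R, (0 < e)%R -> \forall t \near F, f t <= e%:E) -> f @ F --> 0.
Proof.
move=> f_ge0 f_le; apply/fine_cvgP; split.
  apply: filterS (f_le _ ltr01) => t ft.
  by rewrite ge0_fin_numE // (le_lt_trans ft) ?ltry.
apply/cvgr0Pnorm_le => e e0; near=> t.
have fe : f t <= e%:E by near: t; exact: f_le.
rewrite ger0_norm ?fine_ge0 // -lee_fin fineK //.
by rewrite ge0_fin_numE // (le_lt_trans fe) ?ltry.
Unshelve. all: end_near. Qed.

End ereal_limits.

Lemma abse_gt_trans {R : realType} (e : R) (x y : \bar R) :
  ((- e)%:E <= x -> x <= y -> e%:E < `|x| -> e%:E < `|y|)%E.
Proof.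
move=> ex xy; have [x_ge0|x_lt0] := leP 0%E x.
  by rewrite !gee0_abs ?(le_trans x_ge0) // => /lt_le_trans; apply.
by rewrite lte0_abs // lteNr -EFinN => /(le_lt_trans ex); rewrite ltxx.
Qed.

Section nonconstant_gap.
Context d (T : measurableType d) (R : realType) (P : probability T R).
Variable X : {RV P >-> R}.
Local Open Scope ereal_scope.

Lemma cdf_jump_eq1 (c : R) : (forall r, (r < c)%R -> cdf X r = 0) ->
  cdf X c = 1 -> P (X @^-1` [set c]) = 1.
Proof.
move=> cdf_lt cdf_c; rewrite -[LHS]/(distribution P X [set c]).
have lt_c0 : distribution P X `]-oo, c[ = 0.
  apply/eqP; rewrite eq_le measure_ge0 andbT.
  have := @measure_sigma_subadditive _ _ _ (distribution P X) `]-oo, c[%classic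
    (fun n => `]-oo, (c - n.+1%:R^-1)%R]%classic).
  move=> /(_ _ _ _)/le_trans; apply => //.
  - move=> w /=; rewrite in_itv /= => /ltr_add_invr[n wn]; exists n => //=.
    by rewrite in_itv /= lerBrDr ltW.
  - rewrite eseries0 // => n _ _; apply: cdf_lt.
    by rewrite ltrBlDr ltrDl invr_gt0.
rewrite -cdf_c /cdf -(@setUitv1 _ _ _ _ true) // measureU //=; last first.
  by apply/seteqP; split => // w [] /= + wc; rewrite wc in_itv /= ltxx.
by rewrite -[LHS]add0r; congr (_ + _); exact: esym lt_c0.
Qed.

Lemma nonconstant_rv_gap : nonconstant_rv X ->
  exists u v : R, [/\ (u < v)%R, 0 < cdf X u & 0 < ccdf X v].
Proof.
move=> ncX; apply: contrapT => nogap.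
(* Without a gap, cdf X jumps from 0 to 1 at the supremum of its zero set. *)
have cdf0_or_ccdf0 u v : (u < v)%R -> cdf X u = 0 \/ ccdf X v = 0.
  move=> uv; have [|cu] := eqVneq (cdf X u) 0; [by left|right].
  apply: contrapT => /eqP cv; apply: nogap; exists u, v.
  by rewrite !lt0e cu cv !measure_ge0.
have [v0 v0_gt0] : exists v, 0 < ccdf X v.
  exact: filter_ex (cvge_gt_near (cvg_ccdfNy1 X) lte01).
have [u0 u0_gt0] : exists u, 0 < cdf X u.
  exact: filter_ex (cvge_gt_near (cvg_cdfy1 X) lte01).
pose S := [set u : R | cdf X u = 0].
have cdf_le_S r s : S s -> (r <= s)%R -> cdf X r = 0.
  move=> Ss rs; apply/eqP; rewrite eq_le cdf_ge0 andbT -Ss.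
  exact: cdf_nondecreasing.
have supS : has_sup S.
  split.
    have v01 : (v0 - 1 < v0)%R by rewrite ltrBlDr ltrDl.
    exists (v0 - 1)%R; have [//|v00] := cdf0_or_ccdf0 _ _ v01.
    by move: v0_gt0; rewrite v00 ltxx.
  exists u0 => s Ss; rewrite leNgt; apply/negP => /ltW/(cdf_le_S _ _ Ss) u00.
  by move: u0_gt0; rewrite u00 ltxx.
apply: ncX; exists (sup S); apply: cdf_jump_eq1 => [r rS|].
  have [|s Ss rs] := @sup_adherent _ _ (sup S - r)%R _ supS; first by rewrite subr_gt0.
  by apply: cdf_le_S Ss _; rewrite opprB addrCA subrr addr0 in rs; exact: ltW.
have cdf_near1 : cdf X r @[r --> (sup S)^'+] --> 1.
  apply: cvg_near_cst; near=> r.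
  have Sr : (sup S < r)%R by near: r; exact: nbhs_right_gt.
  have mid : ((sup S + r) / 2 < r)%R by lra.
  have [SSr|ccdf0] := cdf0_or_ccdf0 _ _ mid.
    by exfalso; have := sup_upper_bound supS SSr; lra.
  by rewrite cdf_1_ccdf ccdf0 sube0.
exact: cvg_unique _ (@cdf_right_continuous _ _ _ _ X (sup S)) cdf_near1.
Unshelve. all: end_near. Qed.

End nonconstant_gap.

Lemma prod_nat_nonincreasing {R : realDomainType} (q : nat -> R) m n :
  (forall i, 0 <= q i <= 1) -> (m <= n)%N ->
  \prod_(0 <= i < n) q i <= \prod_(0 <= i < m) q i.
Proof.
move=> q01 mn; rewrite (big_cat_nat (leq0n m) mn) /= ler_piMr ?prodr_ge0 ?prodr_ile1 //.
  by move=> i _; case/andP: (q01 i).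
Qed.

Section greedy_blocks.
Context {R : realDomainType}.
Variables (q : nat -> R) (b δ : R).
Hypotheses (b_gt0 : 0 < b) (q_ge : forall i, b <= q i) (q_le1 : forall i, q i <= 1).
Hypotheses (δ_gt0 : 0 < δ) (δ_le1 : δ <= 1).

Let q01 i : 0 <= q i <= 1. Proof. by rewrite q_le1 (le_trans (ltW b_gt0)). Qed.

Lemma greedy_block j k m c : (j < k)%N ->
  \prod_(0 <= i < m) q i < (δ * b) ^+ k ->
  (δ * b) ^+ j <= \prod_(0 <= i < c) q i ->
  exists r, \prod_(c <= i < c + r.+1) q i <= δ /\
            (δ * b) ^+ j.+1 <= \prod_(0 <= i < c + r.+1) q i.
Proof.
move=> jk small large; set Q := fun n => \prod_(0 <= i < n) q i.
have b_le1 : b <= 1 := le_trans (q_ge 0) (q_le1 0).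
have db_gt0 : 0 < δ * b by rewrite mulr_gt0.
have Qc_gt0 : 0 < Q c by apply: lt_le_trans large; rewrite exprn_gt0.
have pow_le : (δ * b) ^+ j.+1 <= b * (δ * Q c).
  by rewrite exprS -mulrA mulrCA !ler_pM2l.
have : exists r, Q (c + r.+1)%N <= δ * Q c.
  exists m; apply: le_trans (prod_nat_nonincreasing (m := m) q01 _) _.
    by rewrite addnS leqW // leq_addl.
  apply: le_trans (ltW small) _; apply: le_trans (ler_wiXn2l _ _ jk) _.
  - by rewrite ltW.
  - by apply: mulr_ile1 => //; exact: ltW.
  by apply: le_trans pow_le _; rewrite ler_piMl // mulr_ge0 // ltW.
(* Take the least r with Q (c + r.+1) <= δ Q c: minimality keeps
   Q (c + r) >= δ Q c, and the last factor q (c + r) is at least b. *)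
case/ex_minnP => r Qr_le Qr_min.
have Qr_ge : δ * Q c <= Q (c + r)%N.
  case: r Qr_le Qr_min => [|r] _ Qr_min; first by rewrite addn0 ler_piMl // ltW.
  by rewrite leNgt; apply/negP => /ltW/Qr_min; rewrite ltnn.
exists r; split.
  by rewrite -(ler_pM2l Qc_gt0) /Q -big_cat_nat ?leq_addr // mulrC.
apply: le_trans pow_le _.
rewrite addnS -addn1 (big_cat_nat (leq0n _) (leq_addr 1 _)) addn1 big_nat1.
rewrite -/(Q (c + r)%N) mulrC.
by apply: ler_pM; rewrite ?mulr_ge0 // ltW.
Qed.

End greedy_blocks.

Lemma count_index_iota_split (p : pred nat) m n : (m <= n)%N ->
  count p (index_iota 0 n) = (count p (index_iota 0 m) + count p (index_iota m n))%N.
Proof. by move=> mn; rewrite -!sum1_count (big_cat_nat (leq0n m) mn). Qed.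

Section independent_blocks.
Context d (T : measurableType d) (R : realType) (P : probability T R).
Variables (Z : nat -> {RV P >-> R}) (B : nat -> set R).
Hypotheses (indepZ : mutually_independent Z) (mB : forall i, measurable (B i)).
Local Open Scope ereal_scope.

Let L i := Z i @^-1` B i.
Let block l r := \bigcap_(i in [set` index_iota l r]) L i.

Let mL i : measurable (L i). Proof. exact: measurable_funPTI. Qed.

Let mblock l r : measurable (block l r).
Proof. by apply: bigcap_measurableType => i _; exact: mL. Qed.

Lemma probability_block l r :
  P (block l r) = (\prod_(l <= i < r) fine (P (L i)))%:E.
Proof.
rewrite /block (indepZ (iota_uniq _ _) mB) -prodEFin.
by apply: eq_bigr => i _; rewrite fineK // fin_num_measure.
Qed.

Lemma exists_prefix_block_lt x :
  P (\bigcap_i L i) < x -> exists m, P (block 0 m) < x.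
Proof.
move=> capx; have block_cap : \bigcap_m block 0 m = \bigcap_i L i.
  apply/seteqP; split => [w wL i _|w wL m _ i _]; last exact: wL.
  by apply: (wL i.+1) => //=; rewrite mem_index_iota ltnSn.
have : P \o block 0 @ \oo --> P (\bigcap_i L i).
  rewrite -block_cap; apply: nonincreasing_cvg_mu => //.
  - by rewrite (le_lt_trans (probability_le1 _ _)) ?ltry.
  - by apply: bigcapT_measurable => m; exact: mblock.
  - move=> m n mn; apply/subsetPset => w wL i /=; rewrite mem_index_iota => iin.
    by apply: wL => /=; rewrite mem_index_iota (leq_trans iin).
by move=> /cvge_lt_near/(_ capx)[N _ hN]; exists N; exact: (hN N (leqnn N)).
Qed.

Lemma independent_lower_tail (b δ : R) k : (0 < b)%R -> (0 < δ <= 1)%R ->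
  (forall i, b%:E <= P (L i)) -> P (\bigcap_i L i) < ((δ * b) ^+ k)%:E ->
  exists2 U, measurable U /\ P U <= (k%:R * δ)%:E &
    forall w, ~ U w -> exists c, (k <= count (fun i => w \notin L i) (index_iota 0 c))%N.
Proof.
move=> b_gt0 /andP[δ_gt0 δ_le1] PL_ge /exists_prefix_block_lt[m].
pose q i := fine (P (L i)).
have q_ge i : (b <= q i)%R by rewrite -lee_fin fineK ?fin_num_measure.
have q_le1 i : (q i <= 1)%R.
  by rewrite -lee_fin fineK ?fin_num_measure ?probability_le1.
rewrite probability_block lte_fin => small.
(* U is the union, over j consecutive greedy blocks, of the events that all
   L i of the block occur; each has probability at most δ. *)
suff /(_ k (leqnn k))[c [U [mU PU _ countU]]] : forall j, (j <= k)%N ->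
    exists c U, [/\ measurable U, P U <= (j%:R * δ)%:E,
      ((δ * b) ^+ j <= \prod_(0 <= i < c) q i)%R &
      forall w, ~ U w -> (j <= count (fun i => w \notin L i) (index_iota 0 c))%N].
  by exists U => // w /countU; exists c.
elim=> [_|j IH jk].
  by exists 0%N, set0; rewrite measure0 mul0r big_geq.
have [c [U [mU PU large countU]]] := IH (ltnW jk).
have [r [block_le large']] := greedy_block b_gt0 q_ge q_le1 δ_gt0 δ_le1 jk small large.
exists (c + r.+1)%N, (U `|` block c (c + r.+1)%N); split => //.
- exact: measurableU.
- apply: le_trans (measureU2 P mU (mblock _ _)) _.
  rewrite -natr1 mulrDl mul1r EFinD; apply: leeD => //.
  by rewrite -lee_fin -probability_block in block_le.
- move=> w /not_orP[/countU Uw /existsNP[i /not_implyP[iin Liw]]].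
  rewrite (count_index_iota_split _ (leq_addr _ _)) -addn1 leq_add //.
  by rewrite -has_count; apply/hasP; exists i => //; rewrite notin_setE.
Qed.

End independent_blocks.

Lemma seq_gt_exists_lbound {I : eqType} {R : realDomainType} (c : R) (s : seq I)
    (f : I -> R) : (forall i, i \in s -> c < f i) ->
  exists2 x, c < x & forall i, i \in s -> x <= f i.
Proof.
elim: s => [_|j s IH fs]; first by exists (c + 1); rewrite ?ltrDl.
have [x cx xs] : exists2 x, c < x & forall i, i \in s -> x <= f i.
  by apply: IH => i si; apply: fs; rewrite inE si orbT.
exists (Order.min x (f j)); first by rewrite lt_min cx fs ?mem_head.
by move=> i; rewrite inE ge_min => /predU1P[->|/xs ->]; rewrite ?lexx ?orbT.
Qed.

Section kth_largest_facts.
Context d (T : measurableType d) (R : realType) (P : probability T R).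
Variables (Z : nat -> {RV P >-> R}) (a : nat -> nat -> R) (n : nat).
Local Open Scope ereal_scope.

Lemma kth_largest_ge_count k w (y : R) (s : seq nat) : uniq s ->
  (k <= count (fun i => y <= a n i + Z i w)%R s)%N ->
  y%:E <= kth_largest a Z n k w.
Proof.
move=> s_uniq ks; apply: ereal_sup_ubound; exists y => //.
exists (take k [seq i <- s | y <= a n i + Z i w]%R); split.
- exact/take_uniq/filter_uniq.
- by rewrite size_takel // size_filter.
- by move=> i /mem_take; rewrite mem_filter => /andP[].
Qed.

Lemma kth_largest_gtP k w (c : R) : c%:E < kth_largest a Z n k w <->
  exists s, [/\ uniq s, size s = k & forall i, i \in s -> c < a n i + Z i w]%R.
Proof.
split=> [/ereal_sup_gt[_ [x [s [s_uniq sk sx]] <-]]|[s [s_uniq sk sc]]].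
  by rewrite lte_fin => cx; exists s; split => // i /sx; exact: lt_le_trans.
have [x cx xs] := seq_gt_exists_lbound sc.
apply: (@lt_le_trans _ _ x%:E); first by rewrite lte_fin.
by apply: ereal_sup_ubound; exists x => //; exists s.
Qed.

Lemma kth_largest1_le w (y : R) : (forall i, a n i + Z i w <= y)%R ->
  kth_largest a Z n 1 w <= y%:E.
Proof.
move=> le_y; apply: ge_ereal_sup => _ [x [s [_ s1 sx]] <-].
case: s s1 sx => [|i []] // _ sx.
by rewrite lee_fin (le_trans (sx i _) (le_y i)) ?mem_head.
Qed.

Lemma kth_largest_le1 k w : (0 < k)%N ->
  kth_largest a Z n k w <= kth_largest a Z n 1 w.
Proof.
move=> k_gt0; apply: ereal_sup_le => _ [x [s [_ sk sx]] <-].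
case: s sk sx => [|i s] sk sx; first by rewrite -sk in k_gt0.
exists x => //; exists [:: i]; split => // j.
by rewrite inE => /eqP->; apply: sx; rewrite mem_head.
Qed.

Lemma measurable_kth_largest_gt k (c : R) :
  measurable [set w | c%:E < kth_largest a Z n k w].
Proof.
have -> : [set w | c%:E < kth_largest a Z n k w] =
    \bigcup_(s in [set s | uniq s /\ size s = k])
      \bigcap_(i in [set` s]) Z i @^-1` `](c - a n i)%R, +oo[.
  apply/seteqP; split => w.
    by move=> /kth_largest_gtP[s [? ? sc]]; exists s => // i /sc /=;
      rewrite in_itv /= ltrBlDl andbT.
  move=> [s [? ?] sc]; apply/kth_largest_gtP; exists s; split => // i /sc /=.
  by rewrite in_itv /= ltrBlDl andbT.
rewrite bigcup_mkcond; apply: countable_bigcupT_measurable => [|s].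
  exact: countableP.
case: ifP => // _; apply: bigcap_measurableType => i _.
exact: measurable_funPTI.
Qed.

Lemma measurable_kth_largest k : measurable_fun [set: T] (kth_largest a Z n k).
Proof.
apply: (measurability _ (ErealGenOInfty.measurableE R)) => //.
by move=> _ [_ [r ->] <-]; rewrite setTI preimage_itvoy; exact: measurable_kth_largest_gt.
Qed.

Lemma measurable_kth_largest_abs_gt k (e : R) :
  measurable [set w | e%:E < `|kth_largest a Z n k w|].
Proof.
have := emeasurable_fun_o_infty measurableT
  (measurableT_comp (@abse_measurable R setT) (measurable_kth_largest k)) e%:E.
by rewrite setTI.
Qed.

End kth_largest_facts.

Section kth_largest_tail.
Context d (T : measurableType d) (R : realType) (P : probability T R).
Variables (Z : nat -> {RV P >-> R}) (a : nat -> nat -> R).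
Hypotheses (iidZ : iid Z) (M1_cvg0 : cvg_in_prob0 P (fun n => kth_largest a Z n 1)).
Local Open Scope ereal_scope.

Local Notation E n k e := [set w | e%:E < `|kth_largest a Z n k w|].

Let cdf_iid i r : cdf (Z i) r = cdf (Z 0) r.
Proof. exact: iidZ.2 _ _ (measurable_itv _). Qed.

Let ccdf_iid i r : ccdf (Z i) r = ccdf (Z 0) r.
Proof. exact: iidZ.2 _ _ (measurable_itv _). Qed.

Lemma eventually_row_lt (v η : R) : (0 < η)%R -> 0 < ccdf (Z 0) v ->
  \forall n \near \oo, forall i, (a n i + v < η)%R.
Proof.
move=> η_gt0 ccdf_gt0; apply: filterS (cvge_lt_near (M1_cvg0 η_gt0) ccdf_gt0).
move=> n PE i; rewrite ltNge; apply/negP => ηv.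
suff : ccdf (Z 0) v <= P (E n 1 η) by rewrite leNgt PE.
rewrite -(ccdf_iid i); change (P (Z i @^-1` `]v, +oo[) <= P (E n 1 η)).
apply: le_measure; rewrite ?inE.
- exact: measurable_funPTI.
- exact: measurable_kth_largest_abs_gt.
move=> w /=; rewrite in_itv /= andbT => vZ; apply: lt_le_trans (lee_abs _).
apply: lt_le_trans
  (kth_largest_ge_count (y := (a n i + Z i w)%R) (s := [:: i]) _ _).
- by rewrite lte_fin; apply: le_lt_trans ηv _; rewrite ltrD2l.
- done.
- by rewrite /= lexx.
Qed.

Lemma kth_largest_lower_tail n k (u η δ : R) : (0 < η)%R -> (0 < δ <= 1)%R ->
  (forall i, a n i + u <= - η)%R -> 0 < cdf (Z 0) u ->
  P (E n 1 (η / 2)) < ((δ * fine (cdf (Z 0) u)) ^+ k)%:E ->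
  exists2 U, measurable U /\ P U <= (k%:R * δ)%:E &
    forall w, ~ U w -> (- η)%:E <= kth_largest a Z n k w.
Proof.
move=> η_gt0 δ01 row_le cdf_gt0 PE_small.
have b_gt0 : (0 < fine (cdf (Z 0) u))%R.
  by rewrite fine_gt0 // cdf_gt0 (le_lt_trans (cdf_le1 _ _)) ?ltry.
have [|||U [mU PU] HU] := independent_lower_tail
  (B := fun i => `]-oo, (- η - a n i)%R]%classic) (k := k) iidZ.1 _ b_gt0 δ01.
- by move=> i; exact: measurable_itv.
- move=> i; rewrite fineK ?fin_num_measure // -(cdf_iid i).
  change (P (Z i @^-1` `]-oo, u]) <= P (Z i @^-1` `]-oo, (- η - a n i)%R])).
  apply: le_measure; rewrite ?inE; try exact: measurable_funPTI.
  apply: preimage_subset; apply: subset_itvl; rewrite bnd_simp.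
  by rewrite lerBrDr addrC row_le.
- apply: le_lt_trans PE_small; apply: le_measure; rewrite ?inE.
  + by apply: bigcap_measurableType => i _; exact: measurable_funPTI.
  + exact: measurable_kth_largest_abs_gt.
  move=> w /= wL; rewrite -abseN; apply: lt_le_trans (lee_abs _).
  rewrite -lteNr -EFinN; apply: le_lt_trans (kth_largest1_le (y := (- η)%R) _) _.
  + by move=> i; move: (wL i I); rewrite /= in_itv /= lerBrDr addrC.
  by rewrite lte_fin ltrN2 ltr_pdivrMr // ltr_pMr // ltr1n.
exists U => // w /HU[c count_c]; apply: kth_largest_ge_count (iota_uniq _ _) _.
apply: leq_trans count_c (sub_count _ _) => i /=.
by rewrite notin_setE /= in_itv /= => /negP; rewrite -ltNge -lerBlDl => /ltW.
Qed.

Lemma prob_kth_largest_abs_gt_le n k (e η : R) (U : set T) : (0 < k)%N ->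
  (η <= e)%R -> measurable U ->
  (forall w, ~ U w -> (- η)%:E <= kth_largest a Z n k w) ->
  P (E n k e) <= P (E n 1 e) + P U.
Proof.
move=> k_gt0 ηe mU HU.
have mE k' : measurable (E n k' e) by exact: measurable_kth_largest_abs_gt.
apply: le_trans (measureU2 _ (mE 1%N) mU); apply: le_measure; rewrite ?inE //.
  exact: measurableU.
move=> w Ew; have [Uw|nUw] := pselect (U w); [by right | left].
apply: abse_gt_trans Ew; last exact: kth_largest_le1.
by apply: le_trans (HU w nUw); rewrite lee_fin lerN2.
Qed.

Lemma kth_largest_tail k (e ε : R) : nonconstant_rv (Z 0) -> (0 < k)%N ->
  (0 < e)%R -> (0 < ε)%R -> \forall n \near \oo, P (E n k e) <= ε%:E.
Proof.
move=> ncZ k_gt0 e_gt0 ε_gt0.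
have [u [v [uv cdf_gt0 ccdf_gt0]]] := nonconstant_rv_gap ncZ.
pose η := Num.min e ((v - u) / 2)%R; pose δ := Num.min 1%R (ε / 2 / k%:R)%R.
have η_gt0 : (0 < η)%R by rewrite lt_min e_gt0 divr_gt0 // subr_gt0.
have η_le_e : (η <= e)%R by rewrite ge_min; apply/orP; left.
have η_le_uv : (η <= (v - u) / 2)%R by rewrite ge_min; apply/orP; right.
have k_gt0R : (0 < k%:R :> R)%R by rewrite ltr0n.
have δ01 : (0 < δ <= 1)%R.
  by rewrite lt_min ltr01 !divr_gt0 //= ge_min; apply/orP; left.
have kδ : (k%:R * δ <= ε / 2)%R.
  by rewrite -ler_pdivlMl // ge_min; apply/orP; right; rewrite mulrC.
have db_gt0 : (0 < (δ * fine (cdf (Z 0) u)) ^+ k)%R.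
  rewrite exprn_gt0 // mulr_gt0 ?(andP δ01).1 // fine_gt0 //.
  by rewrite cdf_gt0 (le_lt_trans (cdf_le1 _ _)) ?ltry.
near=> n.
have row i : (a n i + u <= - η)%R.
  have : (a n i + v < η)%R by move: i; near: n; exact: eventually_row_lt.
  by move: η_le_uv; lra.
have [|U [mU PU] HU] := kth_largest_lower_tail (k := k) η_gt0 δ01 row cdf_gt0 _.
  near: n; apply: cvge_lt_near (M1_cvg0 (divr_gt0 η_gt0 (ltr0Sn _ 1))) _.
  by rewrite lte_fin.
apply: le_trans (prob_kth_largest_abs_gt_le k_gt0 η_le_e mU HU) _.
rewrite [ε in X in _ <= X]splitr EFinD leeD //; last exact: le_trans PU _.
apply: ltW; near: n; apply: cvge_lt_near (M1_cvg0 e_gt0) _.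
by rewrite lte_fin divr_gt0.
Unshelve. all: end_near. Qed.

End kth_largest_tail.

Theorem lemma51 (d : measure_display) (T : measurableType d) (R : realType)
    (P : probability T R) (Z : nat -> {RV P >-> R}) (a : nat -> nat -> R) :
  iid Z -> nonconstant_rv (Z 0%N) ->
  cvg_in_prob0 P (fun n => kth_largest a Z n 1) ->
  forall k : nat, (0 < k)%N -> cvg_in_prob0 P (fun n => kth_largest a Z n k).
Proof.
move=> iidZ ncZ M1_cvg0 k k_gt0 e e_gt0.
apply: cvge0_le => [n|ε ε_gt0]; first exact: measure_ge0.
exact: kth_largest_tail.
Qed.
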